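(* Let $w(\tau):=\left(e^{-3\tau}-\dfrac{4e^{-6\tau}}{(e^{-\tau}+1)^3}\right)1_{(0,\infty)}(\tau)$ for $\tau\in\mathbb{R}$. Then the Fourier transform $\hat w(\xi)=\int_{\mathbb{R}}w(\tau)e^{-i\xi\tau}\,d\tau$ has no zeroes on $\mathbb{R}$. *)

From Stdlib Require Import Reals.
From Coquelicot Require Import Coquelicot.
Open Scope R_scope.

Definition ind_pos (t : R) : R := if Rlt_dec 0 t then 1 else 0.

Definition w (t : R) : R :=
  (exp (-3 * t) - 4 * exp (-6 * t) / (exp (- t) + 1) ^ 3) * ind_pos t.

Definition cexpi (theta : R) : C := (cos theta, sin theta).

Definition fourier_integrand (xi : R) (t : R) : C :=
  Cmult (RtoC (w t)) (cexpi (- (xi * t))).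

From Stdlib Require Import Reals Lra.
From Coquelicot Require Import Coquelicot.
Open Scope R_scope.

(** On (0, oo), [w] is the smooth function [w_smooth]; with [x = exp (-t)] in (0, 1] one
    checks that it is positive, strictly decreasing and at most [exp (-3t)].  The bound makes
    the improper integrals converge.  At [xi = 0] the transform is [∫ w > 0].  For [xi <> 0],
    integrating [w sin(xi t)] by parts against the antiderivative [(1 - cos(xi t)) / xi] gives
    [xi ∫_0^b w sin(xi t) = w(b) (1 - cos(xi b)) + ∫_0^b (-w') (1 - cos(xi t))], whose two
    terms are nonnegative and the second is eventually bounded below by a positive constant;
    hence the imaginary part of the transform does not vanish. *)

Lemma continuous_mult_derivable (f g : R -> R) (t : R) :
  continuous f t -> ex_derive g t -> continuous (fun s => f s * g s) t.
Proof.
  intros Hf Hg.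
  apply (continuous_mult (K := R_AbsRing) f g); [exact Hf|].
  exact (ex_derive_continuous (K := R_AbsRing) (V := R_NormedModule) g t Hg).
Qed.

Lemma ex_RInt_of_continuous (f : R -> R) (u b : R) :
  (forall t, continuous f t) -> ex_RInt f u b.
Proof. intros Hf. apply (ex_RInt_continuous (V := R_CompleteNormedModule)). auto. Qed.

Lemma filterlim_locally_pair {T : Type} {F : (T -> Prop) -> Prop} {FF : Filter F}
    {U V : UniformSpace} (f : T -> U) (g : T -> V) (a : U) (b : V) :
  filterlim f F (locally a) -> filterlim g F (locally b) ->
  filterlim (fun x => (f x, g x)) F (locally (a, b)).
Proof.
  intros Hf Hg P [eps HP]. unfold filtermap.
  apply (filter_imp (fun x => ball a eps (f x) /\ ball b eps (g x))).
  - intros x Hx. apply HP. exact Hx.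
  - apply filter_and; [apply Hf | apply Hg]; exists eps; auto.
Qed.

Lemma lim_ge_of_eventually_ge (F : R -> R) (l c M : R) :
  filterlim F (Rbar_locally p_infty) (locally l) ->
  (forall b, M <= b -> c <= F b) -> c <= l.
Proof.
  intros Hl Hc.
  apply (filterlim_le (F := Rbar_locally p_infty) (fun _ => c) F c l);
    [|apply filterlim_const | exact Hl].
  exists M. intros b Hb. apply Hc. lra.
Qed.

Lemma ex_lim_RInt_dominated (f g : R -> R) (a : R) :
  (forall u b, ex_RInt f u b) -> (forall u b, ex_RInt g u b) ->
  (forall t, a <= t -> Rabs (f t) <= g t) ->
  (exists lg : R, filterlim (fun b => RInt g a b) (Rbar_locally p_infty) (locally lg)) ->
  exists lf : R, filterlim (fun b => RInt f a b) (Rbar_locally p_infty) (locally lf).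
Proof.
  intros Hf Hg Hfg [lg Hlg].
  apply (filterlim_locally_cauchy (U := R_CompleteSpace)).
  intros eps.
  destruct (proj2 (filterlim_locally_cauchy (U := R_CompleteSpace) _) (ex_intro _ lg Hlg) eps)
    as [P [HP HPg]].
  exists (fun b => a <= b /\ P b). split.
  { apply filter_and; [exists a; intros; lra | exact HP]. }
  assert (Hcauchy : forall u b, a <= u <= b -> P u -> P b ->
            Rabs (RInt f a b - RInt f a u) < eps).
  { intros u b Hub Pu Pb.
    assert (Hsplit : forall h, (forall u b, ex_RInt h u b) ->
              RInt h a b - RInt h a u = RInt h u b).
    { intros h Hh. rewrite <- (RInt_Chasles h a u b) by apply Hh.
      unfold plus; simpl; ring. }
    rewrite Hsplit by exact Hf.
    apply (Rle_lt_trans _ (RInt g u b)).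
    - apply (norm_RInt_le (V := R_NormedModule) f g u b);
        [lra | intros t Ht; apply Hfg; lra
        | apply (RInt_correct (V := R_CompleteNormedModule)), Hf
        | apply (RInt_correct (V := R_CompleteNormedModule)), Hg].
    - rewrite <- Hsplit by exact Hg.
      apply (Rle_lt_trans _ _ _ (Rle_abs _)), (HPg u b Pu Pb). }
  intros u b [Hu Pu] [Hb Pb].
  destruct (Rle_lt_dec u b).
  - apply Hcauchy; auto.
  - apply ball_sym, Hcauchy; auto; lra.
Qed.

Lemma RInt_exp_neg (k u b : R) : k <> 0 ->
  RInt (fun t => exp (- (k * t))) u b = (exp (- (k * u)) - exp (- (k * b))) / k.
Proof.
  intros Hk. apply is_RInt_unique.
  replace ((exp (- (k * u)) - exp (- (k * b))) / k)
    with (minus (- exp (- (k * b)) / k) (- exp (- (k * u)) / k))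
    by (unfold minus, plus, opp; simpl; field; exact Hk).
  apply (is_RInt_derive (fun t => - exp (- (k * t)) / k)).
  - intros t _. auto_derive; [exact I | field; exact Hk].
  - intros t _. apply (ex_derive_continuous (K := R_AbsRing) (V := R_NormedModule)).
    auto_derive. exact I.
Qed.

Lemma filterlim_RInt_exp_neg (k : R) : 0 < k ->
  filterlim (fun b => RInt (fun t => exp (- (k * t))) 0 b)
    (Rbar_locally p_infty) (locally (/ k)).
Proof.
  intros Hk.
  apply (filterlim_ext (fun b => (1 - exp (- (k * b))) * / k)).
  { intros b. rewrite RInt_exp_neg, Rmult_0_r, Ropp_0, exp_0 by lra. reflexivity. }
  change (is_lim (fun b => (1 - exp (- (k * b))) * / k) p_infty (/ k)).
  replace (Finite (/ k)) with (Rbar_mult (1 - 0) (/ k)) by (simpl; f_equal; ring).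
  apply (is_lim_scal_r (fun b => 1 - exp (- (k * b))) (/ k) p_infty (1 - 0)).
  apply (is_lim_minus _ _ _ 1 0); [apply is_lim_const | | reflexivity].
  apply (is_lim_comp exp (fun b => - (k * b)) p_infty 0 m_infty).
  - apply is_lim_exp_m.
  - apply (is_lim_ext (fun b => (- k) * b)); [intros; ring|].
    replace m_infty with (Rbar_mult (- k) p_infty).
    + apply is_lim_scal_l, is_lim_id.
    + simpl. case Rle_dec; intros; [exfalso; lra | reflexivity].
  - exists 0. intros; discriminate.
Qed.

Lemma ex_lim_RInt_exp_dominated (f : R -> R) (k : R) : 0 < k ->
  (forall t, continuous f t) -> (forall t, 0 <= t -> Rabs (f t) <= exp (- (k * t))) ->
  exists l : R, filterlim (fun b => RInt f 0 b) (Rbar_locally p_infty) (locally l).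
Proof.
  intros Hk Hf Hdom.
  apply (ex_lim_RInt_dominated f (fun t => exp (- (k * t)))); auto.
  - intros. apply ex_RInt_of_continuous, Hf.
  - intros. apply ex_RInt_of_continuous. intros t.
    apply (ex_derive_continuous (K := R_AbsRing) (V := R_NormedModule)). auto_derive. exact I.
  - exists (/ k). apply filterlim_RInt_exp_neg, Hk.
Qed.

Lemma is_RInt_gen_halfline {V : NormedModule R_AbsRing} (f F : R -> V) (a : R) (l : V) :
  (forall t, t < a -> f t = zero) ->
  (forall b, a <= b -> is_RInt f a b (F b)) ->
  filterlim F (Rbar_locally p_infty) (locally l) ->
  is_RInt_gen f (Rbar_locally m_infty) (Rbar_locally p_infty) l.
Proof.
  intros Hzero HF Hl P HP.
  destruct (Hl P HP) as [M HM].
  exists (fun x => x < a) (fun b => Rmax a M < b).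
  - exists a. auto.
  - exists (Rmax a M). auto.
  - intros x b Hx Hb. simpl.
    pose proof (Rmax_l a M). pose proof (Rmax_r a M).
    exists (F b). split; [|apply HM; lra].
    rewrite <- (plus_zero_l (F b)).
    apply (is_RInt_Chasles f x a b); [|apply HF; lra].
    apply (is_RInt_ext (fun _ => zero)).
    + intros t Ht. rewrite Hzero; [reflexivity|].
      rewrite Rmax_right in Ht by lra. lra.
    + pose proof (is_RInt_const x a (@zero V)) as Hc.
      rewrite (@scal_zero_r R_Ring (NormedModule.ModuleSpace R_AbsRing V)) in Hc.
      exact Hc.
Qed.

Lemma lim_RInt_pos (f : R -> R) (l : R) :
  (forall t, continuous f t) -> (forall t, 0 < t -> 0 < f t) ->
  filterlim (fun b => RInt f 0 b) (Rbar_locally p_infty) (locally l) -> 0 < l.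
Proof.
  intros Hc Hpos Hl.
  assert (Hex : forall u b, ex_RInt f u b) by (intros; apply ex_RInt_of_continuous, Hc).
  assert (H01 : 0 < RInt f 0 1)
    by (apply RInt_gt_0; [lra | intros; apply Hpos; lra | intros; apply Hc]).
  apply (Rlt_le_trans _ _ _ H01), (lim_ge_of_eventually_ge _ _ _ 1 Hl).
  intros b Hb.
  rewrite <- (RInt_Chasles f 0 1 b) by auto.
  assert (0 <= RInt f 1 b) by (apply RInt_ge_0; auto; intros; apply Rlt_le, Hpos; lra).
  unfold plus; simpl. lra.
Qed.

Lemma cos_lt_1 (x : R) : 0 < Rabs x <= PI -> cos x < 1.
Proof.
  intros Hx. rewrite <- cos_0.
  destruct (Rle_lt_dec 0 x).
  - rewrite Rabs_pos_eq in Hx by lra. apply cos_decreasing_1; lra.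
  - rewrite Rabs_left in Hx by lra. rewrite <- cos_neg. apply cos_decreasing_1; lra.
Qed.

Section DecreasingSineTransform.

Variables v dv : R -> R.
Hypothesis v_derive : forall t, is_derive v t (dv t).
Hypothesis dv_continuous : forall t, continuous dv t.
Hypothesis v_nonneg : forall t, 0 <= t -> 0 <= v t.
Hypothesis dv_neg : forall t, 0 < t -> dv t < 0.

Variable xi : R.

Let v_continuous (t : R) : continuous v t.
Proof.
  apply (ex_derive_continuous (K := R_AbsRing) (V := R_NormedModule)).
  exists (dv t). apply v_derive.
Qed.

Let ex_RInt_dv_cos (u b : R) : ex_RInt (fun t => dv t * (cos (xi * t) - 1)) u b.
Proof.
  apply ex_RInt_of_continuous. intros.
  apply continuous_mult_derivable; auto. auto_derive. exact I.
Qed.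

Let ex_RInt_v_sin (u b : R) : ex_RInt (fun t => v t * sin (xi * t)) u b.
Proof.
  apply ex_RInt_of_continuous. intros.
  apply continuous_mult_derivable; auto. auto_derive. exact I.
Qed.

Lemma RInt_sin_by_parts (b : R) :
  xi * RInt (fun t => v t * sin (xi * t)) 0 b
  = v b * (1 - cos (xi * b)) + RInt (fun t => dv t * (cos (xi * t) - 1)) 0 b.
Proof.
  set (g t := dv t * (1 - cos (xi * t)) + v t * (xi * sin (xi * t))).
  assert (Hderiv : forall t, is_derive (fun t => v t * (1 - cos (xi * t))) t (g t)).
  { intros t.
    assert (Hc : is_derive (fun t => 1 - cos (xi * t)) t (xi * sin (xi * t)))
      by (auto_derive; [exact I | ring]).
    exact (is_derive_mult (K := R_AbsRing) v _ t _ _ (v_derive t) Hc Rmult_comm). }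
  assert (Hparts : is_RInt g 0 b (v b * (1 - cos (xi * b)))).
  { replace (v b * (1 - cos (xi * b)))
      with (minus (v b * (1 - cos (xi * b))) (v 0 * (1 - cos (xi * 0))))
      by (rewrite Rmult_0_r, cos_0; unfold minus, plus, opp; simpl; ring).
    apply (is_RInt_derive (V := R_CompleteNormedModule) (fun t => v t * (1 - cos (xi * t))));
      intros t _; [apply Hderiv|].
    apply (continuous_plus (V := R_NormedModule) (fun t => dv t * _) (fun t => v t * _));
      apply continuous_mult_derivable; auto; auto_derive; exact I. }
  assert (Hdiff : is_RInt g 0 b (xi * RInt (fun t => v t * sin (xi * t)) 0 b
                                - RInt (fun t => dv t * (cos (xi * t) - 1)) 0 b)).
  { apply (is_RInt_ext
             (fun t => minus (xi * (v t * sin (xi * t))) (dv t * (cos (xi * t) - 1)))).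
    { intros t _. unfold g, minus, plus, opp; simpl. ring. }
    apply (is_RInt_minus (V := R_NormedModule));
      [|apply (RInt_correct (V := R_CompleteNormedModule)), ex_RInt_dv_cos].
    apply (is_RInt_scal (V := R_NormedModule)), (RInt_correct (V := R_CompleteNormedModule)),
      ex_RInt_v_sin. }
  pose proof (eq_trans (eq_sym (is_RInt_unique _ _ _ _ Hparts)) (is_RInt_unique _ _ _ _ Hdiff)).
  simpl in *. lra.
Qed.

Lemma lim_sin_transform_pos (S : R) : xi <> 0 ->
  filterlim (fun b => RInt (fun t => v t * sin (xi * t)) 0 b)
    (Rbar_locally p_infty) (locally S) ->
  0 < xi * S.
Proof.
  intros Hxi HS.
  assert (Habs : 0 < Rabs xi) by (apply Rabs_pos_lt, Hxi).
  set (b0 := PI / Rabs xi).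
  assert (Hb0 : 0 < b0) by (apply Rdiv_lt_0_compat; [apply PI_RGT_0 | exact Habs]).
  assert (Hcos : forall t, cos (xi * t) - 1 <= 0)
    by (intros; pose proof (COS_bound (xi * t)); lra).
  assert (Hc : 0 < RInt (fun t => dv t * (cos (xi * t) - 1)) 0 b0).
  { apply RInt_gt_0; [exact Hb0 | |].
    - intros t Ht.
      assert (Hxt : 0 < Rabs (xi * t) <= PI).
      { rewrite Rabs_mult, (Rabs_pos_eq t) by lra.
        split; [apply Rmult_lt_0_compat; lra|].
        replace PI with (Rabs xi * b0) by (unfold b0; field; lra).
        apply Rmult_le_compat_l; lra. }
      pose proof (cos_lt_1 _ Hxt). pose proof (dv_neg t (proj1 Ht)). nra.
    - intros t _. apply continuous_mult_derivable; auto. auto_derive. exact I. }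
  apply (Rlt_le_trans _ _ _ Hc).
  apply (lim_ge_of_eventually_ge (fun b => xi * RInt (fun t => v t * sin (xi * t)) 0 b) _ _ b0).
  - eapply filterlim_comp;
      [exact HS | exact (filterlim_scal_r (K := R_AbsRing) (V := R_NormedModule) xi S)].
  - intros b Hb. rewrite RInt_sin_by_parts.
    rewrite <- (RInt_Chasles _ 0 b0 b) by apply ex_RInt_dv_cos.
    assert (0 <= v b * (1 - cos (xi * b))).
    { apply Rmult_le_pos; [apply v_nonneg; lra | pose proof (Hcos b); lra]. }
    assert (0 <= RInt (fun t => dv t * (cos (xi * t) - 1)) b0 b).
    { apply RInt_ge_0; [lra | apply ex_RInt_dv_cos |].
      intros t Ht. pose proof (dv_neg t). pose proof (Hcos t). nra. }
    unfold plus; simpl. lra.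
Qed.

End DecreasingSineTransform.

Lemma exp_mult_pow (n : nat) (x : R) : exp (INR n * x) = exp x ^ n.
Proof.
  induction n as [|n IH].
  - rewrite Rmult_0_l, exp_0. reflexivity.
  - rewrite S_INR, Rmult_plus_distr_r, Rmult_1_l, exp_plus, IH. simpl. ring.
Qed.

Lemma exp_neg_bounds (t : R) : 0 <= t -> 0 < exp (- t) <= 1.
Proof.
  intros Ht. split; [apply exp_pos|]. rewrite <- exp_0.
  destruct (Req_dec t 0) as [->|]; [rewrite Ropp_0; lra | left; apply exp_increasing; lra].
Qed.

Definition w_smooth (t : R) : R :=
  exp (-3 * t) - 4 * exp (-6 * t) / (exp (- t) + 1) ^ 3.

Definition dw_smooth (t : R) : R :=
  let x := exp (- t) in
  - 3 * x ^ 3 * (1 + 4 * x + 6 * x ^ 2 - 4 * x ^ 3 - 3 * x ^ 4) / (x + 1) ^ 4.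

Lemma w_smooth_exp_neg (t : R) :
  w_smooth t = exp (- t) ^ 3 - 4 * exp (- t) ^ 6 / (exp (- t) + 1) ^ 3.
Proof.
  unfold w_smooth. rewrite <- !exp_mult_pow. simpl INR.
  do 2 f_equal; [|do 2 f_equal]; ring.
Qed.

Lemma w_smooth_derive (t : R) : is_derive w_smooth t (dw_smooth t).
Proof.
  apply (is_derive_ext (fun t => exp (- t) ^ 3 - 4 * exp (- t) ^ 6 / (exp (- t) + 1) ^ 3)).
  { intros. symmetry. apply w_smooth_exp_neg. }
  assert (Hx := exp_pos (- t)).
  auto_derive.
  - apply Rgt_not_eq. repeat apply Rmult_lt_0_compat; lra.
  - unfold dw_smooth. field. lra.
Qed.

Lemma w_smooth_continuous (t : R) : continuous w_smooth t.
Proof.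
  apply (ex_derive_continuous (K := R_AbsRing) (V := R_NormedModule)).
  exists (dw_smooth t). apply w_smooth_derive.
Qed.

Lemma dw_smooth_continuous (t : R) : continuous dw_smooth t.
Proof.
  apply (ex_derive_continuous (K := R_AbsRing) (V := R_NormedModule)).
  unfold dw_smooth. assert (Hx := exp_pos (- t)).
  auto_derive. apply Rgt_not_eq. repeat apply Rmult_lt_0_compat; lra.
Qed.

Lemma w_smooth_pos (t : R) : 0 <= t -> 0 < w_smooth t.
Proof.
  intros Ht. rewrite w_smooth_exp_neg.
  destruct (exp_neg_bounds t Ht) as [Hx0 Hx1]. set (x := exp (- t)) in *.
  assert (Hx2 : x ^ 3 <= x ^ 2 <= x).
  { assert (0 <= x ^ 2) by nra. split; simpl; nra. }
  assert (Hcube : 4 * x ^ 3 < (x + 1) ^ 3) by (simpl in *; nra).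
  assert (Hd : 0 < (x + 1) ^ 3) by (apply pow_lt; lra).
  assert (Hx3 : 0 < x ^ 3) by (apply pow_lt; lra).
  replace (x ^ 3 - 4 * x ^ 6 / (x + 1) ^ 3)
    with (x ^ 3 * ((x + 1) ^ 3 - 4 * x ^ 3) / (x + 1) ^ 3) by (field; lra).
  apply Rdiv_lt_0_compat; [apply Rmult_lt_0_compat|]; lra.
Qed.

Lemma dw_smooth_neg (t : R) : 0 <= t -> dw_smooth t < 0.
Proof.
  intros Ht. unfold dw_smooth. cbv zeta.
  destruct (exp_neg_bounds t Ht) as [Hx0 Hx1]. set (x := exp (- t)) in *.
  assert (Hd : 0 < (x + 1) ^ 4) by (apply pow_lt; lra).
  assert (Hx3 : 0 < x ^ 3) by (apply pow_lt; lra).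
  assert (Hx4 : x ^ 4 <= x ^ 2 /\ x ^ 3 <= x).
  { assert (0 <= x ^ 2) by nra. split; simpl; nra. }
  assert (Hp : 0 < 1 + 4 * x + 6 * x ^ 2 - 4 * x ^ 3 - 3 * x ^ 4) by nra.
  assert (0 < 3 * x ^ 3 * (1 + 4 * x + 6 * x ^ 2 - 4 * x ^ 3 - 3 * x ^ 4) / (x + 1) ^ 4)
    by (apply Rdiv_lt_0_compat; [apply Rmult_lt_0_compat|]; lra).
  unfold Rdiv in *. lra.
Qed.

Lemma Rabs_w_smooth_mult_le (t c : R) : 0 <= t -> Rabs c <= 1 ->
  Rabs (w_smooth t * c) <= exp (- (3 * t)).
Proof.
  intros Ht Hc.
  assert (Hpos := w_smooth_pos t Ht).
  assert (Hle : w_smooth t <= exp (- (3 * t))).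
  { unfold w_smooth. replace (-3 * t) with (- (3 * t)) by ring.
    assert (0 < 4 * exp (-6 * t) / (exp (- t) + 1) ^ 3).
    { apply Rdiv_lt_0_compat; [pose proof (exp_pos (-6 * t)); lra|].
      apply pow_lt. pose proof (exp_pos (- t)). lra. }
    lra. }
  rewrite Rabs_mult, (Rabs_pos_eq (w_smooth t)) by lra.
  pose proof (Rabs_pos c). nra.
Qed.

Lemma ex_lim_RInt_w_smooth_mult (c : R -> R) :
  (forall t, ex_derive c t) -> (forall t, Rabs (c t) <= 1) ->
  exists l : R, filterlim (fun b => RInt (fun t => w_smooth t * c t) 0 b)
                  (Rbar_locally p_infty) (locally l).
Proof.
  intros Hc Hc1.
  apply (ex_lim_RInt_exp_dominated _ 3); [lra | |].
  - intros t. apply continuous_mult_derivable; [apply w_smooth_continuous | apply Hc].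
  - intros t Ht. apply Rabs_w_smooth_mult_le; [exact Ht | apply Hc1].
Qed.

Lemma fourier_integrand_nonpos (xi t : R) : t <= 0 -> fourier_integrand xi t = 0%C.
Proof.
  intros Ht. unfold fourier_integrand, w, ind_pos.
  destruct (Rlt_dec 0 t); [lra|]. rewrite Rmult_0_r. apply Cmult_0_l.
Qed.

Lemma fourier_integrand_pos (xi t : R) : 0 < t ->
  fourier_integrand xi t = (w_smooth t * cos (xi * t), - (w_smooth t * sin (xi * t))).
Proof.
  intros Ht. unfold fourier_integrand, w, ind_pos, cexpi, Cmult, RtoC.
  destruct (Rlt_dec 0 t); [|lra]. simpl. rewrite cos_neg, sin_neg.
  unfold w_smooth. f_equal; simpl; ring.
Qed.

Lemma is_RInt_gen_fourier_integrand (xi C S : R) :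
  filterlim (fun b => RInt (fun t => w_smooth t * cos (xi * t)) 0 b)
    (Rbar_locally p_infty) (locally C) ->
  filterlim (fun b => RInt (fun t => w_smooth t * sin (xi * t)) 0 b)
    (Rbar_locally p_infty) (locally S) ->
  is_RInt_gen (fourier_integrand xi) (Rbar_locally m_infty) (Rbar_locally p_infty) (C, - S).
Proof.
  intros HC HS.
  set (wc t := w_smooth t * cos (xi * t)).
  set (ws t := w_smooth t * sin (xi * t)).
  assert (Hex : forall (c : R -> R) b, (forall t, ex_derive c t) ->
                  ex_RInt (fun t => w_smooth t * c t) 0 b).
  { intros c b Hc. apply ex_RInt_of_continuous. intros t.
    apply continuous_mult_derivable; [apply w_smooth_continuous | apply Hc]. }
  apply (is_RInt_gen_halfline _ (fun b => (RInt wc 0 b, - RInt ws 0 b)) 0).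
  - intros t Ht. apply fourier_integrand_nonpos. lra.
  - intros b Hb. apply (is_RInt_ext (fun t => (wc t, - ws t))).
    { intros t Ht. rewrite Rmin_left, Rmax_right in Ht by lra.
      symmetry. apply fourier_integrand_pos. lra. }
    apply is_RInt_fct_extend_pair.
    + apply (RInt_correct (V := R_CompleteNormedModule)), Hex.
      intros t. auto_derive. exact I.
    + apply (is_RInt_opp (V := R_NormedModule)), (RInt_correct (V := R_CompleteNormedModule)), Hex.
      intros t. auto_derive. exact I.
  - apply filterlim_locally_pair; [exact HC|].
    eapply filterlim_comp;
      [exact HS | apply (filterlim_opp (K := R_AbsRing) (V := R_NormedModule))].
Qed.

Theorem proposition4p2 :
  forall xi : R,
    exists l : C,
      is_RInt_gen (fourier_integrand xi)
        (Rbar_locally m_infty) (Rbar_locally p_infty) l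
      /\ l <> 0%C.
Proof.
  intros xi.
  destruct (ex_lim_RInt_w_smooth_mult (fun t => cos (xi * t))) as [C HC].
  { intros t. auto_derive. exact I. }
  { intros t. apply Rabs_le, COS_bound. }
  destruct (ex_lim_RInt_w_smooth_mult (fun t => sin (xi * t))) as [S HS].
  { intros t. auto_derive. exact I. }
  { intros t. apply Rabs_le, SIN_bound. }
  exists (C, - S). split; [exact (is_RInt_gen_fourier_integrand xi C S HC HS)|].
  intros Hl. injection Hl as HC0 HS0.
  destruct (Req_dec xi 0) as [-> | Hxi].
  - apply (lim_RInt_pos _ C) in HC; [lra | |].
    + intros t. apply continuous_mult_derivable; [apply w_smooth_continuous|].
      auto_derive. exact I.
    + intros t Ht. rewrite Rmult_0_l, cos_0, Rmult_1_r. apply w_smooth_pos. lra.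
  - apply (lim_sin_transform_pos w_smooth dw_smooth w_smooth_derive dw_smooth_continuous)
      in HS; [nra | |  | exact Hxi].
    + intros t Ht. apply Rlt_le, w_smooth_pos, Ht.
    + intros t Ht. apply dw_smooth_neg. lra.
Qed.
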